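(* Let ancillae $A_1,\dots,A_n$ consecutively measure a $d$-dimensional quantum system $Q$ (prepared in a pure state, or unprepared and purified by a reference $R$), and let each ancilla $A_k$ be amplified by a detector $D_k$. Then for all $1\le i$, $j\le n$ with $j\ge i+2$, the detectors $D_i$ and $D_j$ share no entropy given the intermediate detectors: $$S(D_i:D_j\,|\,D_{i+1}\cdots D_{j-1})=0,$$ where $S(D_i:D_j|D_{i+1}\cdots D_{j-1})=S(D_j|D_{j-1}\cdots D_{i+1})-S(D_j|D_{j-1}\cdots D_i)$.
   Context: Setting: $Q$ is $d$-dimensional; either prepared in $|Q\rangle=\sum_{x_1}\alpha^{(1)}_{x_1}|\widetilde{x}_1\rangle$, or unprepared, i.e. in $|QR\rangle=d^{-1/2}\sum_x|\widetilde{x}\rangle|x\rangle$ with a reference $R$. Ancilla $A_k$ measures $Q$ in the orthonormal basis $\{|\widetilde{x}_k\rangle\}$, with $U^{(k)}_{x_{k-1}x_k}=\langle\widetilde{x}_k|\widetilde{x}_{k-1}\rangle$ unitary; the measurement is the unitary $\sum_x|\widetilde{x}_k\rangle\langle\widetilde{x}_k|\otimes U_x$ with $U_x|0\rangle=|x\rangle$ on $Q$ and the $d$-dimensional ancilla (initially $|0\rangle$, basis $\{|x\rangle\}$), performed consecutively for $k=1,\dots,n$. Amplification: detector $D_k$ copies $A_k$'s basis state, $|x\rangle_{A_k}|0\rangle_{D_k}\mapsto|x\rangle_{A_k}|x\rangle_{D_k}$. Entropies are von Neumann entropies (log base $d$) of reduced states of the global pure state; $S(X|Y)=S(XY)-S(Y)$.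 *)

From HB Require Import structures.
From mathcomp Require Import all_boot all_order all_algebra.
From mathcomp Require Import spectral.
From mathcomp Require Import reals exp complex.
Set Implicit Arguments.
Unset Strict Implicit.
Unset Printing Implicit Defensive.
Import Order.TTheory GRing.Theory Num.Theory.
Local Open Scope ring_scope.

(* Every subsystem is d-dimensional (computational basis 'I_d).  A global    *)
(* system is described by a finite type Sys of subsystem labels; a          *)
(* configuration (computational basis vector of the global Hilbert space)    *)
(* is a function Sys -> 'I_d, and a (pure) state vector is a function        *)
(* from configurations to amplitudes.                                        *)

Section VonNeumann.
Variable R : realType.
Local Notation C := R[i].

(* eigenvalues (with multiplicity) of a square complex matrix: the roots of
   its characteristic polynomial, which splits since C is algebraically closed *)
Definition eigs (m : nat) (M : 'M[C]_m) : seq C :=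
  sval (closed_field_poly_normal (char_poly M)).

(* x log_d x, with the convention 0 log 0 = 0 *)
Definition xlogd (d : nat) (x : R) : R :=
  if x == 0 then 0 else x * (ln x / ln (d%:R)).

Definition vN_entropy (d m : nat) (rho : 'M[C]_m) : R :=
  - \sum_(l <- eigs rho) xlogd d (complex.Re l).

End VonNeumann.

Section Systems.
Variable R : realType.
Local Notation C := R[i].
Variable d : nat.
Variable Sys : finType.

Definition cfg := {ffun Sys -> 'I_d}.
Definition state := cfg -> C.

Definition subcfg (S : {set Sys}) := {ffun {x : Sys | x \in S} -> 'I_d}.

Definition glue (S : {set Sys}) (a : subcfg S) (c : subcfg (~: S)) : cfg :=
  [ffun s => match boolP (s \in S) with
             | AltTrue h => a (exist _ s h)
             | AltFalse h => c (exist _ s (etrans (in_setC s S) h))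
             end].

(* reduced density matrix of the pure state psi on the subsystems S
   (partial trace over the complement of S), written in the basis of
   subcfg S enumerated by enum_val *)
Definition rdm (psi : state) (S : {set Sys}) : 'M[C]_#|{: subcfg S}| :=
  \matrix_(a, b) \sum_(c : subcfg (~: S))
      psi (glue (enum_val a) c) * (psi (glue (enum_val b) c))^*.

Definition ent (psi : state) (S : {set Sys}) : R := vN_entropy d (rdm psi S).

Definition condEnt (psi : state) (X Y : {set Sys}) : R :=
  ent psi (X :|: Y) - ent psi Y.

Definition condMI (psi : state) (X Y Z : {set Sys}) : R :=
  condEnt psi Y Z - condEnt psi Y (X :|: Z).

Definition upd (c : cfg) (s : Sys) (v : 'I_d) : cfg :=
  [ffun t => if t == s then v else c t].

(* apply an operator on the two (distinct) subsystems s1 s2, given by its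
   matrix elements M a b a' b' = <a b| M |a' b'> *)
Definition apply2 (s1 s2 : Sys) (M : 'I_d -> 'I_d -> 'I_d -> 'I_d -> C)
  (psi : state) : state :=
  fun c => \sum_(a' : 'I_d) \sum_(b' : 'I_d)
            M (c s1) (c s2) a' b' * psi (upd (upd c s1 a') s2 b').

(* the measurement unitary  sum_x |x~><x~|_Q (x) U_x  on Q and an ancilla,
   where row x of Bk is the basis vector |x~> (Bk x q = <q|x~>) *)
Definition measOp (Bk : 'M[C]_d) (U : 'I_d -> 'M[C]_d) :
  'I_d -> 'I_d -> 'I_d -> 'I_d -> C :=
  fun q a q' a' => \sum_(x : 'I_d) Bk x q * (Bk x q')^* * U x a a'.

Definition pairOp (V : 'M[C]_(d * d)) : 'I_d -> 'I_d -> 'I_d -> 'I_d -> C :=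
  fun a b a' b' => V (mxvec_index a b) (mxvec_index a' b').

(* consecutive measurements k = 1..n of Q by A_k (basis B k), each ancilla
   A_k being amplified by detector D_k right after its measurement *)
Definition evolve (n : nat) (Q : Sys) (A D : 'I_n -> Sys)
  (B : nat -> 'M[C]_d) (U : 'I_d -> 'M[C]_d) (V : 'M[C]_(d * d))
  (psi0 : state) : state :=
  foldl (fun psi (k : 'I_n) =>
           apply2 (A k) (D k) (pairOp V) (apply2 Q (A k) (measOp (B k.+1) U) psi))
        psi0 (enum 'I_n).

End Systems.

(* Prepared:   systems Q, A_1..A_n, D_1..D_n   (label type unit + (I_n+I_n)) *)
(* Unprepared: systems Q, R, A_1..A_n, D_1..D_n (label type bool + (I_n+I_n))*)
(* Ancilla / detector number k+1 of the paper is labelled by k : 'I_n.       *)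

Definition SysP (n : nat) : finType := (unit + ('I_n + 'I_n))%type.
Definition QP {n} : SysP n := inl tt.
Definition AP {n} (k : 'I_n) : SysP n := inr (inl k).
Definition DP {n} (k : 'I_n) : SysP n := inr (inr k).

Definition SysU (n : nat) : finType := (bool + ('I_n + 'I_n))%type.
Definition QU {n} : SysU n := inl false.
Definition RU {n} : SysU n := inl true.
Definition AU {n} (k : 'I_n) : SysU n := inr (inl k).
Definition DU {n} (k : 'I_n) : SysU n := inr (inr k).

Section Settings.
Variable R : realType.
Local Notation C := R[i].
Variables (d n : nat) (hd : (0 < d)%N).
Local Notation z := (Ordinal hd).
Variables (B : nat -> 'M[C]_d) (U : 'I_d -> 'M[C]_d) (V : 'M[C]_(d * d)).

(* initial state |Q> (x) |0..0>_A (x) |0..0>_D, |Q> = sum_x alpha_x |x~_1> *)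
Definition init_prepared (alpha : 'I_d -> C) : state R d (SysP n) :=
  fun c => (\sum_(x : 'I_d) alpha x * B 1 x (c QP)) *
           [forall k : 'I_n, (c (AP k) == z) && (c (DP k) == z)]%:R.

(* initial state d^{-1/2} sum_x |x~_1>_Q |x>_R (x) |0..0>_A (x) |0..0>_D *)
Definition init_unprepared : state R d (SysU n) :=
  fun c => (sqrtC (d%:R : C))^-1 *
           (\sum_(x : 'I_d) B 1 x (c QU) * (c RU == x)%:R) *
           [forall k : 'I_n, (c (AU k) == z) && (c (DU k) == z)]%:R.

Definition final_prepared (alpha : 'I_d -> C) : state R d (SysP n) :=
  evolve QP AP DP B U V (init_prepared alpha).

Definition final_unprepared : state R d (SysU n) :=
  evolve QU AU DU B U V init_unprepared.

End Settings.

(* Every detector D_k holds a copy of its ancilla A_k, so on the support of the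
   final state each detector has a classical twin outside any set of detectors.
   Tracing out the twins makes the reduced states of sets of detectors diagonal,
   and their entropies become Shannon entropies of the weights
   p(c) = |psi(c)|^2 of the basis configurations c.  The final amplitude is a
   product of overlaps <x~_(m+2)|x~_(m+1)> of consecutive detector readings, so
   p = F * G where F depends only on the systems of index < j and G only on
   those of index >= j and on D_(j-1).  Since j >= i + 2, D_(j-1) lies among the
   conditioning detectors; the marginals then satisfy p_Z p_XYZ = p_YZ p_XZ,
   which makes the conditional mutual information vanish. *)

From HB Require Import structures.
From mathcomp Require Import all_boot all_order all_algebra.
From mathcomp Require Import spectral.
From mathcomp Require Import reals exp complex.
From mathcomp Require Import ring lra.
From mathcomp Require boolp.
Import Order.TTheory GRing.Theory Num.Theory.
Local Open Scope ring_scope.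
Set Implicit Arguments.
Unset Strict Implicit.
Unset Printing Implicit Defensive.

Section DiagonalEntropy.
Variable R : realType.
Local Notation C := R[i].

Lemma perm_eq_eigs_diag (m : nat) (M : 'M[C]_m) : is_diag_mx M ->
  perm_eq (eigs M) [seq M i i | i <- enum 'I_m].
Proof.
move=> dM; apply: prod_XsubC_eq.
rewrite /eigs; case: (closed_field_poly_normal _) => r /= Hr.
have /eqP lead1 := char_poly_monic M.
rewrite lead1 scale1r in Hr; rewrite -Hr char_poly_trig ?is_diag_mx_is_trig //.
by rewrite big_map big_enum.
Qed.

Lemma vN_entropy_diag (d m : nat) (M : 'M[C]_m) : is_diag_mx M ->
  vN_entropy d M = - \sum_(i < m) xlogd d (complex.Re (M i i)).
Proof.
by move=> dM; rewrite /vN_entropy (perm_big _ (perm_eq_eigs_diag dM)) big_map big_enum.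
Qed.

End DiagonalEntropy.

Section Weight.
Variable R : realType.
Local Notation C := R[i].

Definition weight (z : C) : R := complex.Re (z * z^*).

Lemma weightE (z : C) : weight z = complex.Re z ^+ 2 + complex.Im z ^+ 2.
Proof. by case: z => a b; rewrite /weight /= mulrN opprK -!expr2. Qed.

Lemma weight_ge0 (z : C) : 0 <= weight z.
Proof. by rewrite weightE addr_ge0 ?sqr_ge0. Qed.

Lemma weightM (a b : C) : weight (a * b) = weight a * weight b.
Proof. by case: a b => [a1 a2] [b1 b2]; rewrite !weightE /=; ring. Qed.

Lemma Re_sum (I : Type) (r : seq I) (P : pred I) (F : I -> C) :
  complex.Re (\sum_(i <- r | P i) F i) = \sum_(i <- r | P i) complex.Re (F i).
Proof. by apply: (big_morph (@complex.Re R)) => // -[a b] [c e]. Qed.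

End Weight.

Section Configurations.
Variables (d : nat) (Sys : finType).
Local Notation cfg := (cfg d Sys).
Local Notation subcfg := (subcfg d).
Implicit Types (S T : {set Sys}) (c : cfg).

Lemma glue_in S (a : subcfg S) (b : subcfg (~: S)) s (h : s \in S) :
  glue a b s = a (exist _ s h).
Proof.
rewrite /glue ffunE; destruct (boolP (s \in S)) as [h'|h'].
  by congr (a _); apply: val_inj.
by exfalso; move: (h'); rewrite h.
Qed.

Lemma glue_out S (a : subcfg S) (b : subcfg (~: S)) s (h : s \in ~: S) :
  glue a b s = b (exist _ s h).
Proof.
rewrite /glue ffunE; destruct (boolP (s \in S)) as [h'|h']; last first.
  by congr (b _); apply: val_inj.
by exfalso; move: (h); rewrite in_setC h'.
Qed.

Definition restr S c : subcfg S := [ffun x => c (val x)].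

Lemma restr_gluel S (a : subcfg S) (b : subcfg (~: S)) : restr S (glue a b) = a.
Proof. by apply/ffunP => -[s h]; rewrite ffunE /= glue_in. Qed.

Lemma restr_gluer S (a : subcfg S) (b : subcfg (~: S)) : restr (~: S) (glue a b) = b.
Proof. by apply/ffunP => -[s h]; rewrite ffunE /= glue_out. Qed.

Lemma glue_restr S c : glue (restr S c) (restr (~: S) c) = c.
Proof.
apply/ffunP => s; case: (boolP (s \in S)) => h; first by rewrite glue_in ffunE.
have h' : s \in ~: S by rewrite in_setC.
by rewrite glue_out ffunE.
Qed.

Lemma sum_glue (V : nmodType) S (F : cfg -> V) :
  \sum_c F c = \sum_(a : subcfg S) \sum_(b : subcfg (~: S)) F (glue a b).
Proof.
rewrite pair_big /= (reindex (fun p : subcfg S * subcfg (~: S) => glue p.1 p.2)) //=.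
apply: onW_bij; exists (fun c => (restr S c, restr (~: S) c)) => [[a b]|c] /=.
  by rewrite restr_gluel restr_gluer.
by rewrite glue_restr.
Qed.

Lemma updE c s v t : upd c s v t = if t == s then v else c t.
Proof. by rewrite ffunE. Qed.

Lemma upd_id c s : upd c s (c s) = c.
Proof. by apply/ffunP => t; rewrite updE; case: eqP => [->|]. Qed.

Definition agree S c c' : bool := [forall s in S, c s == c' s].

Lemma eq_restr_agree S c c' : (restr S c' == restr S c) = agree S c c'.
Proof.
apply/eqP/forall_inP => [E s hs|E].
  by have := congr1 (fun f : subcfg S => f (exist _ s hs)) E; rewrite !ffunE /= => ->.
by apply/ffunP => -[s hs]; rewrite !ffunE /= (eqP (E s hs)).
Qed.

Lemma agreeU S1 S2 c c' : agree (S1 :|: S2) c c' = agree S1 c c' && agree S2 c c'.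
Proof.
apply/forall_inP/andP => [E|[/forall_inP E1 /forall_inP E2] s].
  by split; apply/forall_inP => s hs; apply: E; rewrite inE hs ?orbT.
by rewrite inE => /orP [] hs; [apply: E1 | apply: E2].
Qed.

Lemma agree_eq_on S T c c1 c2 : S \subset T ->
  {in T, forall s, c1 s = c2 s} -> agree S c c1 = agree S c c2.
Proof.
move=> ST E; apply: eq_forallb_in => s hs.
by rewrite E // (subsetP ST).
Qed.

Definition depends_on (V : Type) S (f : cfg -> V) :=
  forall c c', {in S, forall s, c s = c' s} -> f c = f c'.

Definition mix T c1 c2 : cfg := [ffun s => if s \in T then c1 s else c2 s].

Lemma mixK T c1 c2 : mix T (mix T c1 c2) (mix T c2 c1) = c1.
Proof. by apply/ffunP => s; rewrite !ffunE; case: (s \in T). Qed.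

End Configurations.

Section ShannonEntropy.
Variables (R : realType) (d : nat) (Sys : finType).
Local Notation C := R[i].
Local Notation cfg := (cfg d Sys).
Local Notation subcfg := (subcfg d).
Implicit Types (S T W X Y Z : {set Sys}) (c : cfg) (P F G : cfg -> R).

Definition marg P S c : R := \sum_c' (agree S c c')%:R * P c'.

(* Entropy of the S-marginal, written as a sum over full configurations:
   - sum_c P(c) log_d P_S(c|_S). *)
Definition shannon P S : R := - \sum_c P c * (ln (marg P S c) / ln (d%:R : R)).

Lemma xlogdE (x : R) : xlogd d x = x * (ln x / ln (d%:R : R)).
Proof. by rewrite /xlogd; case: eqP => [->|]; rewrite ?mul0r. Qed.

Definition copied_outside (psi : state R d Sys) S :=
  forall s, s \in S -> exists2 t, t \notin S & forall c, psi c != 0 -> c s = c t.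

Lemma copied_outside_sub (psi : state R d Sys) S1 S2 :
  S1 \subset S2 -> copied_outside psi S2 -> copied_outside psi S1.
Proof.
move=> S12 cp s /(subsetP S12) /cp [t tS2 copy]; exists t => //.
by apply: contra tS2; apply: (subsetP S12).
Qed.

(* An off-diagonal entry pairs configurations that differ at some s in S, hence
   also at its copy outside S, over which the partial trace is diagonal. *)
Lemma rdm_diag (psi : state R d Sys) S : copied_outside psi S -> is_diag_mx (rdm psi S).
Proof.
move=> cp; apply/is_diag_mxP => a b ab; rewrite mxE; apply: big1 => e _.
have /existsP [[s hs] /= neq_ab] : [exists x, enum_val a x != enum_val b x].
  have : enum_val a != enum_val b by apply: contra ab => /eqP /enum_val_inj ->.
  rewrite -negb_forall; apply: contra => /forallP E.
  by apply/eqP/ffunP => x; apply/eqP.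
have [t /negbTE tS copy] := cp s hs.
have ht : t \in ~: S by rewrite inE tS.
have [->|pa] := eqVneq (psi (glue (enum_val a) e)) 0; first by rewrite mul0r.
have [->|pb] := eqVneq (psi (glue (enum_val b) e)) 0; first by rewrite conjC0 mulr0.
move: (copy _ pa) (copy _ pb) neq_ab.
by rewrite !(glue_in _ _ hs) !(glue_out _ _ ht) => -> ->; rewrite eqxx.
Qed.

Lemma ent_shannon (psi : state R d Sys) S :
  copied_outside psi S -> ent psi S = shannon (fun c => weight (psi c)) S.
Proof.
move=> cp; rewrite /ent vN_entropy_diag ?rdm_diag // /shannon.
under eq_bigr => a _ do rewrite mxE.
rewrite -(big_enum_val (A := {: subcfg S}) (fun a : subcfg S =>
    xlogd d (complex.Re (\sum_(e : subcfg (~: S)) psi (glue a e) * (psi (glue a e))^*)))) /=.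
congr (- _); rewrite (sum_glue S); apply: eq_bigr => a _.
rewrite Re_sum xlogdE mulr_suml; apply: eq_bigr => b _.
congr (_ * (ln _ / _)).
rewrite /marg (sum_glue S) (bigD1 a) //= [X in _ + X]big1 ?addr0.
  by apply: eq_bigr => b' _; rewrite -eq_restr_agree !restr_gluel eqxx mul1r.
move=> a' a'a; apply: big1 => b' _.
by rewrite -eq_restr_agree !restr_gluel (negbTE a'a) mul0r.
Qed.

Lemma marg_ge P S c : (forall c, 0 <= P c) -> P c <= marg P S c.
Proof.
move=> P0; rewrite /marg (bigD1 c) //=.
have -> : agree S c c by apply/forall_inP.
by rewrite mul1r lerDl sumr_ge0 // => c' _; rewrite mulr_ge0 ?ler0n.
Qed.

Lemma shannon_cmi_eq0 P X Y Z : (forall c, 0 <= P c) ->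
  (forall c, marg P Z c * marg P (Y :|: (X :|: Z)) c =
             marg P (Y :|: Z) c * marg P (X :|: Z) c) ->
  (shannon P (Y :|: Z) - shannon P Z) -
  (shannon P (Y :|: (X :|: Z)) - shannon P (X :|: Z)) = 0.
Proof.
move=> P0 markov.
pose L x := ln x / ln (d%:R : R).
have sums : \sum_c P c * L (marg P Z c) + \sum_c P c * L (marg P (Y :|: (X :|: Z)) c)
    = \sum_c P c * L (marg P (Y :|: Z) c) + \sum_c P c * L (marg P (X :|: Z) c).
  rewrite -!big_split; apply: eq_bigr => c _ /=.
  have [->|Pc] := eqVneq (P c) 0; first by rewrite !mul0r addr0.
  have marg_pos S : marg P S c \is Num.pos.
    by rewrite posrE (lt_le_trans _ (marg_ge _ _ P0)) // lt0r Pc P0.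
  by rewrite -!mulrDr /L -!mulrDl -!lnM ?marg_pos // markov.
move: sums; rewrite /shannon -/L; lra.
Qed.

Lemma sum_mix T F G : depends_on T F -> depends_on (~: T) G ->
  (\sum_c F c * G c) * #|{: cfg}|%:R = (\sum_c F c) * (\sum_c G c).
Proof.
move=> dF dG; rewrite [RHS]mulr_suml; under [RHS]eq_bigr => c1 _ do rewrite mulr_sumr.
have mixE c1 c2 : F c1 * G c2 = F (mix T c1 c2) * G (mix T c1 c2).
  congr (_ * _); [apply: dF => s hs | apply: dG => s].
    by rewrite ffunE hs.
  by rewrite ffunE in_setC => /negbTE ->.
under eq_bigr => c1 _ do under eq_bigr => c2 _ do rewrite mixE.
rewrite pair_big /= (reindex (fun p : cfg * cfg => (mix T p.1 p.2, mix T p.2 p.1))) /=.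
  under [RHS]eq_bigr => p _ do rewrite mixK.
  rewrite -(pair_big predT predT (fun a b => F a * G a)) /= mulr_suml.
  by apply: eq_bigr => c _; rewrite sumr_const mulr_natr.
by apply: onW_bij; exists (fun p : cfg * cfg => (mix T p.1 p.2, mix T p.2 p.1)) => -[a b] /=;
  rewrite !mixK.
Qed.

Section Markov.
Variables (F G : cfg -> R) (T W : {set Sys}).
Hypotheses (dF : depends_on T F) (dG : depends_on (~: T :|: W) G).
Local Notation P := (fun c => F c * G c).

(* Once the configuration on W is fixed, the parts inside and outside T are
   independent. *)
Lemma marg_split S1 S2 c : W \subset S1 -> S1 \subset T -> S2 \subset ~: T ->
  marg P (S1 :|: S2) c * #|{: cfg}|%:R =
  (\sum_c' (agree S1 c c')%:R * F c') * (\sum_c' (agree S2 c c')%:R * G (mix T c c')).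
Proof.
move=> WS1 S1T S2T; rewrite /marg -(sum_mix (T := T)); first last.
- move=> c1 c2 E; rewrite (agree_eq_on _ S2T E); congr (_ * G _).
  by apply/ffunP => s; rewrite !ffunE; case: ifP => // sT; rewrite E // inE sT.
- by move=> c1 c2 E; rewrite (agree_eq_on _ S1T E) (dF E).
congr (_ * _); apply: eq_bigr => c' _.
rewrite agreeU; have [/forall_inP c'S1|] /= := boolP (agree S1 c c'); last by rewrite !mul0r.
rewrite mul1r mulrCA; congr (_ * (_ * _)).
apply: dG => s; rewrite !inE ffunE => /orP [/negbTE -> //|sW].
by case: ifP => // _; rewrite (eqP (c'S1 s (subsetP WS1 s sW))).
Qed.

Lemma marg_markov X Y Z c : W \subset Z -> X \subset T -> Z \subset T -> Y \subset ~: T ->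
  marg P Z c * marg P (Y :|: (X :|: Z)) c = marg P (Y :|: Z) c * marg P (X :|: Z) c.
Proof.
move=> WZ XT ZT YT.
have N0 : (#|{: cfg}|%:R : R) != 0 by rewrite pnatr_eq0 -lt0n; apply/card_gt0P; exists c.
have WXZ : W \subset X :|: Z by apply: subset_trans WZ (subsetUr _ _).
have XZT : X :|: Z \subset T by rewrite subUset XT ZT.
have T0 : set0 \subset ~: T by rewrite sub0set.
have mZ := marg_split c WZ ZT T0; have mXZ := marg_split c WXZ XZT T0.
have mYZ := marg_split c WZ ZT YT; have mXYZ := marg_split c WXZ XZT YT.
rewrite !setU0 in mZ mXZ; rewrite [Y :|: (X :|: Z)]setUC [Y :|: Z]setUC.
apply: (mulIf N0); apply: (mulIf N0).
have regroup a b k : a * b * k * k = (a * k) * (b * k) :> R by ring.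
by rewrite !regroup mZ mXZ mYZ mXYZ; ring.
Qed.

End Markov.

Lemma condMI_markov_eq0 (psi : state R d Sys) F G T W X Y Z :
  copied_outside psi (X :|: Y :|: Z) ->
  (forall c, weight (psi c) = F c * G c) ->
  depends_on T F -> depends_on (~: T :|: W) G ->
  W \subset Z -> X \subset T -> Z \subset T -> Y \subset ~: T ->
  condMI psi X Y Z = 0.
Proof.
move=> cp hP dF dG WZ XT ZT YT.
rewrite /condMI /condEnt !ent_shannon; try by apply: copied_outside_sub cp;
  apply/subsetP => s; rewrite !inE; case: (s \in X); case: (s \in Y); case: (s \in Z).
apply: shannon_cmi_eq0 => [c|c]; first exact: weight_ge0.
have margE S : marg (fun c => weight (psi c)) S c = marg (fun c => F c * G c) S c.
  by apply: eq_bigr => c' _; rewrite hP.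
by rewrite !margE (marg_markov dF dG _ WZ XT ZT YT).
Qed.

End ShannonEntropy.

Section Gates.
Variables (R : realType) (d : nat) (hd : (0 < d)%N) (Sys : finType).
Local Notation C := R[i].
Local Notation z := (Ordinal hd).
Local Notation cfg := (cfg d Sys).
Implicit Types (c : cfg) (psi : state R d Sys).

Lemma apply2_ground (s1 s2 : Sys) (M : 'I_d -> 'I_d -> 'I_d -> 'I_d -> C) psi c :
  (forall c', c' s2 != z -> psi c' = 0) ->
  apply2 s1 s2 M psi c = \sum_a M (c s1) (c s2) a z * psi (upd (upd c s1 a) s2 z).
Proof.
move=> psi0; apply: eq_bigr => a _; rewrite (bigD1 z) //= big1 ?addr0 // => b bz.
by rewrite psi0 ?mulr0 // updE eqxx.
Qed.

Lemma sum_eq_mul (f : 'I_d -> C) (a : 'I_d) : \sum_x f x * (a == x)%:R = f a.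
Proof.
rewrite (bigD1 a) //= eqxx mulr1 big1 ?addr0 // => x xa.
by rewrite eq_sym (negbTE xa) mulr0.
Qed.

Lemma apply2_measure (Bk : 'M[C]_d) (U : 'I_d -> 'M[C]_d) (Q A : Sys) psi c :
  (forall x a, U x a z = (a == x)%:R) -> (forall c', c' A != z -> psi c' = 0) ->
  apply2 Q A (measOp Bk U) psi c =
  \sum_q Bk (c A) (c Q) * (Bk (c A) q)^* * psi (upd (upd c Q q) A z).
Proof.
move=> hU psi0; rewrite apply2_ground //; apply: eq_bigr => q _.
by rewrite /measOp; under eq_bigr => x _ do rewrite hU; rewrite sum_eq_mul.
Qed.

Lemma apply2_amplify (V : 'M[C]_(d * d)) (A D : Sys) psi c :
  (forall x a b, V (mxvec_index a b) (mxvec_index x z) = ((a == x) && (b == x))%:R) ->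
  (forall c', c' D != z -> psi c' = 0) ->
  apply2 A D (pairOp V) psi c = (c A == c D)%:R * psi (upd c D z).
Proof.
move=> hV psi0; rewrite apply2_ground // /pairOp.
under eq_bigr => a _ do rewrite hV.
rewrite (bigD1 (c A)) //= eqxx big1 ?addr0 => [|a aA]; last first.
  by rewrite eq_sym (negbTE aA) mul0r.
by rewrite eq_sym upd_id.
Qed.

End Gates.

Section MeasurementChain.
Variables (R : realType) (d : nat) (hd : (0 < d)%N).
Local Notation C := R[i].
Local Notation z := (Ordinal hd).
Variables (K : finType) (q0 : K) (n' : nat).
Local Notation n := n'.+1.
Local Notation Sys := (K + ('I_n + 'I_n))%type.
Local Notation cfg := (cfg d Sys).
Local Notation Q := (inl q0 : Sys).
Local Notation A k := (inr (inl k) : Sys).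
Local Notation D k := (inr (inr k) : Sys).
Variables (B : nat -> 'M[C]_d) (U : 'I_d -> 'M[C]_d) (V : 'M[C]_(d * d)).
Hypothesis hU : forall x a : 'I_d, U x a z = (a == x)%:R.
Hypothesis hV : forall x a b : 'I_d,
  V (mxvec_index a b) (mxvec_index x z) = ((a == x) && (b == x))%:R.
Variable phi : cfg -> C.
Hypothesis phi_inl : forall c c' : cfg, (forall r, c (inl r) = c' (inl r)) -> phi c = phi c'.
Implicit Types c : cfg.

Lemma eq_inl r r' : (inl r == inl r' :> Sys) = (r == r'). Proof. by []. Qed.
Lemma eqA k k' : (A k == A k') = (k == k'). Proof. by []. Qed.
Lemma eqD k k' : (D k == D k') = (k == k'). Proof. by []. Qed.

Definition reading m c : 'I_d := c (D (inord m)).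

(* overlap m y x = <x~_(m+2)|y~_(m+1)>, the entry U^(m+2)_(y x) of the paper
   (detector m carries the paper's index m+1). *)
Definition overlap m (y x : 'I_d) : C := \sum_q (B m.+2 x q)^* * B m.+1 y q.

Definition record_amp k c : C :=
  (\sum_q (B 1 (reading 0 c) q)^* * phi (upd c Q q)) *
  \prod_(m < k) overlap m (reading m c) (reading m.+1 c).

Definition amp k c : C :=
  if k is k'.+1 then B k (reading k' c) (c Q) * record_amp k' c else phi c.

Definition recorded k c : bool :=
  [forall m : 'I_n, if (m < k)%N then c (A m) == c (D m)
                    else (c (A m) == z) && (c (D m) == z)].

Definition stage k c : C := (recorded k c)%:R * amp k c.

Definition step (psi : state R d Sys) (k : 'I_n) : state R d Sys :=
  apply2 (A k) (D k) (pairOp V) (apply2 Q (A k) (measOp (B k.+1) U) psi).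

Lemma stage_unused_eq0 k (kk : 'I_n) c : (k <= kk)%N ->
  (c (A kk) != z) || (c (D kk) != z) -> stage k c = 0.
Proof.
move=> kkk fresh; rewrite /stage; case: (boolP (recorded k c)) => [/forallP/(_ kk)|_].
  by rewrite ltnNge kkk /= => /andP [/eqP Az /eqP Dz]; rewrite Az Dz eqxx in fresh.
by rewrite mul0r.
Qed.

Lemma eq_record_amp k c c' :
  (forall r, r != q0 -> c (inl r) = c' (inl r)) ->
  (forall m, (m <= k)%N -> reading m c = reading m c') ->
  record_amp k c = record_amp k c'.
Proof.
move=> Einl Edet; rewrite /record_amp Edet //; congr (_ * _).
  apply: eq_bigr => q _; congr (_ * _); apply: phi_inl => r.
  by rewrite !updE eq_inl; case: eqP => // /eqP /Einl.
by apply: eq_bigr => m _; rewrite !Edet // ltnW.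
Qed.

Section Reset.
Variables (kk : 'I_n) (c : cfg) (q : 'I_d).

(* The configuration that measuring A_kk and amplifying it turn into c, when
   Q was in the basis state q. *)
Definition reset : cfg := upd (upd (upd c (D kk) z) Q q) (A kk) z.

Lemma resetE s : reset s =
  if s == A kk then z else if s == Q then q else if s == D kk then z else c s.
Proof. by rewrite !updE; case: (s =P A kk). Qed.

Lemma reading_reset m : (m < kk)%N -> reading m reset = reading m c.
Proof.
move=> mkk; rewrite /reading resetE /= eqD.
have [/(congr1 val)|//] := eqVneq (inord m : 'I_n) kk.
by rewrite /= inordK ?(ltn_trans mkk) // => mE; rewrite mE ltnn in mkk.
Qed.

Lemma record_amp_reset k : (k < kk)%N -> record_amp k reset = record_amp k c.
Proof.
move=> kkk; apply: eq_record_amp => [r rq0|m mk].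
  by rewrite resetE /= eq_inl (negbTE rq0).
by rewrite reading_reset // (leq_ltn_trans mk).
Qed.

Lemma recorded_reset : c (A kk) = c (D kk) -> recorded kk reset = recorded kk.+1 c.
Proof.
move=> AD; apply: eq_forallb => m; rewrite !resetE /=.
have [->|mkk] := eqVneq m kk; first by rewrite ltnn ltnSn !eqxx AD eqxx.
have -> : (m < kk.+1)%N = (m < kk)%N by rewrite ltnS leq_eqVlt (val_eqE m kk) (negbTE mkk).
by rewrite eqA eqD (negbTE mkk).
Qed.

End Reset.

Lemma sum_amp_reset (kk : 'I_n) c :
  \sum_q (B kk.+1 (reading kk c) q)^* * amp kk (reset kk c q) = record_amp kk c.
Proof.
case E: (nat_of_ord kk) => [|k] /=.
  rewrite /record_amp big_ord0 mulr1; apply: eq_bigr => q _; congr (_ * _).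
  by apply: phi_inl => r; rewrite !updE; case: (inl r =P Q).
have kkk : (k < kk)%N by rewrite E.
have -> : record_amp k.+1 c = overlap k (reading k c) (reading k.+1 c) * record_amp k c.
  by rewrite /record_amp big_ord_recr /=; ring.
rewrite /overlap mulr_suml; apply: eq_bigr => q _.
by rewrite reading_reset // record_amp_reset // resetE eqxx mulrA.
Qed.

Lemma step_stage (kk : 'I_n) : step (stage kk) kk = stage kk.+1.
Proof.
apply: boolp.funext => c.
have fresh_A c' : c' (A kk) != z -> stage kk c' = 0.
  by move=> Az; apply: (stage_unused_eq0 (kk := kk)); rewrite ?Az.
have fresh_D c' : c' (D kk) != z -> stage kk c' = 0.
  by move=> Dz; apply: (stage_unused_eq0 (kk := kk)); rewrite ?Dz ?orbT.
rewrite /step apply2_amplify // => [|c' Dz]; last first.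
  by rewrite apply2_measure // big1 // => q _; rewrite fresh_D ?mulr0 // !updE.
rewrite apply2_measure //.
have [AD|AD] := eqVneq (c (A kk)) (c (D kk)); last first.
  rewrite mul0r /stage; case: (boolP (recorded kk.+1 c)) => [/forallP/(_ kk)|_].
    by rewrite ltnSn (negbTE AD).
  by rewrite mul0r.
have readingE : reading kk c = c (A kk) by rewrite AD /reading inord_val.
rewrite mul1r !updE /= -readingE.
under eq_bigr => q _ do rewrite -/(reset kk c q) /stage recorded_reset // mulrACA.
by rewrite -mulr_sumr sum_amp_reset /stage /=; ring.
Qed.

Lemma evolve_stage :
  evolve Q (fun k => A k) (fun k => D k) B U V
    (fun c => phi c * [forall k : 'I_n, (c (A k) == z) && (c (D k) == z)]%:R) = stage n.
Proof.
rewrite /evolve -(take_size (enum 'I_n)) size_enum_ord.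
suff stages k : (k <= n)%N -> foldl step (stage 0) (take k (enum 'I_n)) = stage k.
  by rewrite -stages //; congr foldl; apply: boolp.funext => c; rewrite /stage mulrC.
elim: k => [|k IH kn]; first by rewrite take0.
rewrite (take_nth ord0) ?size_enum_ord // foldl_rcons IH 1?ltnW //.
by rewrite -{1 3}(nth_enum_ord ord0 kn) step_stage.
Qed.

Lemma stage_copied (S : {set Sys}) :
  S \subset [set D k | k : 'I_n] -> copied_outside (stage n) S.
Proof.
move=> SD s /(subsetP SD) /imsetP [k _ ->]; exists (A k).
  by apply/negP => /(subsetP SD) /imsetP [].
move=> c; rewrite /stage; case: (boolP (recorded n c)) => [/forallP/(_ k)|_].
  by rewrite ltn_ord => /eqP.
by rewrite mul0r eqxx.
Qed.

Section SplitAtJ.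
Variable j : 'I_n.
Hypothesis j_gt0 : (0 < j)%N.

Definition past : {set Sys} := [set s : Sys | match s with
  | inl r => r != q0
  | inr (inl k) | inr (inr k) => (k < j)%N end].

Definition early_amp c : C :=
  [forall m : 'I_n, (m < j)%N ==> (c (A m) == c (D m))]%:R * record_amp j.-1 c.

Definition late_amp c : C :=
  [forall m : 'I_n, (j <= m)%N ==> (c (A m) == c (D m))]%:R *
  (B n (reading n' c) (c Q) * \prod_(j.-1 <= m < n') overlap m (reading m c) (reading m.+1 c)).

Lemma stage_split c : stage n c = early_amp c * late_amp c.
Proof.
rewrite /stage /early_amp /late_amp /amp /record_amp.
have -> : recorded n c = [forall m : 'I_n, (m < j)%N ==> (c (A m) == c (D m))] &&
                         [forall m : 'I_n, (j <= m)%N ==> (c (A m) == c (D m))].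
  apply/forallP/andP => [E|[/forallP lo /forallP hi] m].
    by split; apply/forallP => m; apply/implyP => _; move: (E m); rewrite ltn_ord.
  rewrite ltn_ord; case: (ltnP m j) => mj.
    exact: (implyP (lo m)).
  exact: (implyP (hi m)).
have jn' : (j.-1 <= n')%N by rewrite -ltnS (leq_ltn_trans (leq_pred _)).
rewrite -mulnb natrM.
rewrite -(big_mkord xpredT (fun m => overlap m (reading m c) (reading m.+1 c))).
rewrite (big_cat_nat (leq0n j.-1) jn') /= big_mkord; ring.
Qed.

Lemma reading_past m c c' :
  (m < j)%N -> {in past, forall s, c s = c' s} -> reading m c = reading m c'.
Proof. by move=> mj E; rewrite /reading E // inE /= inordK // (ltn_trans mj). Qed.

Lemma early_amp_depends : depends_on past early_amp.
Proof.
move=> c c' E; rewrite /early_amp.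
congr ((nat_of_bool _)%:R * _).
  by apply: eq_forallb => m; case: (ltnP m j) => //= mj; rewrite !E // inE.
apply: eq_record_amp => [r rq0|m mj]; first by rewrite E // inE.
by apply: reading_past; rewrite // (leq_ltn_trans mj) // ltn_predL.
Qed.

Lemma late_amp_depends : depends_on (~: past :|: [set D (inord j.-1)]) late_amp.
Proof.
move=> c c' E.
have Edet m : (j.-1 <= m)%N -> (m < n)%N -> reading m c = reading m c'.
  move=> jm mn; rewrite /reading E // !inE /= inordK //.
  case: (ltnP m j) => //= mj; apply/eqP; congr (D _); apply: val_inj.
  have j'n : (j.-1 < n)%N by rewrite (leq_ltn_trans (leq_pred j)).
  by rewrite /= !inordK //; apply/eqP; rewrite eqn_leq jm andbT -ltnS prednK.
rewrite /late_amp; congr ((nat_of_bool _)%:R * (B n _ _ * _)).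
- by apply: eq_forallb => m; case: (leqP j m) => //= jm; rewrite !E // !inE /= ltnNge jm.
- by rewrite Edet // (leq_trans (leq_pred _)) // -ltnS.
- by rewrite E // !inE eqxx.
- by apply: eq_big_nat => m /andP [jm mn']; rewrite !Edet ?(leq_trans jm) // ltnS ltnW.
Qed.

End SplitAtJ.

Lemma condMI_detectors_eq0 (i j : 'I_n) : (i.+2 <= j)%N ->
  condMI (evolve Q (fun k => A k) (fun k => D k) B U V
            (fun c => phi c * [forall k : 'I_n, (c (A k) == z) && (c (D k) == z)]%:R))
    [set D i] [set D j] [set D k | k : 'I_n & (i < k < j)%N] = 0.
Proof.
move=> ij; rewrite evolve_stage.
have j_gt0 : (0 < j)%N by rewrite (leq_trans _ ij).
have j'_lt_j : (j.-1 < j)%N by rewrite ltn_predL.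
have i_lt_j' : (i < j.-1)%N by rewrite -ltnS prednK.
apply: (condMI_markov_eq0 (F := fun c => weight (early_amp j c))
          (G := fun c => weight (late_amp j c)) (T := past j) (W := [set D (inord j.-1)])).
- apply: stage_copied; rewrite !subUset !sub1set !imset_f //=.
  by apply/subsetP => s /imsetP [k _ ->]; rewrite imset_f.
- by move=> c; rewrite (stage_split j) weightM.
- by move=> c c' E; rewrite (early_amp_depends j_gt0 E).
- by move=> c c' E; rewrite (late_amp_depends j_gt0 E).
- rewrite sub1set; apply/imsetP; exists (inord j.-1) => //.
  by rewrite inE inordK ?i_lt_j' ?j'_lt_j // (ltn_trans j'_lt_j).
- by rewrite sub1set inE /= (ltn_trans _ ij).
- by apply/subsetP => s /imsetP [k]; rewrite inE => /andP [_ kj] ->; rewrite inE.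
- by rewrite sub1set !inE /= ltnn.
Qed.

End MeasurementChain.

Theorem corollary1 (R : realType) (d n : nat) (hd : (0 < d)%N)
  (B : nat -> 'M[R[i]]_d) (U : 'I_d -> 'M[R[i]]_d) (V : 'M[R[i]]_(d * d)) :
  (* B k : orthonormal basis {|x~_k>} (rows) measured by A_k, 1 <= k <= n *)
  (forall k, (1 <= k <= n)%N -> B k \is unitarymx) ->
  (* U_x unitary with U_x |0> = |x> *)
  (forall x : 'I_d, U x \is unitarymx) ->
  (forall x a : 'I_d, U x a (Ordinal hd) = (a == x)%:R) ->
  (* amplification unitary: |x>_A |0>_D -> |x>_A |x>_D *)
  V \is unitarymx ->
  (forall x a b : 'I_d,
     V (mxvec_index a b) (mxvec_index x (Ordinal hd)) = ((a == x) && (b == x))%:R) ->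
  forall i j : 'I_n, (i.+2 <= j)%N ->
    (forall alpha : 'I_d -> R[i], \sum_(x : 'I_d) `|alpha x| ^+ 2 = 1 ->
       condMI (@final_prepared R d n hd B U V alpha)
              [set DP i] [set DP j] [set DP k | k : 'I_n & (i < k < j)%N] = 0)
    /\
    condMI (@final_unprepared R d n hd B U V)
           [set DU i] [set DU j] [set DU k | k : 'I_n & (i < k < j)%N] = 0.
Proof.
move=> _ _ hU _ hV i j ij.
case: n i j ij => [[]//|n'] i j ij; split.
  move=> alpha _.
  apply: (condMI_detectors_eq0 tt B hU hV
            (phi := fun c => \sum_x alpha x * B 1 x (c (inl tt))) _ ij).
  by move=> c c' E; apply: eq_bigr => x _; rewrite E.
apply: (condMI_detectors_eq0 false B hU hV (phi := fun c => (sqrtC (d%:R : R[i]))^-1 *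
          \sum_x B 1 x (c (inl false)) * (c (inl true) == x)%:R) _ ij).
by move=> c c' E; congr (_ * _); apply: eq_bigr => x _; rewrite !E.
Qed.
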